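(* Let $A$ and $B$ be rings, $f: A\to B$ a ring homomorphism and $J$ a proper ideal of $B$. Let $S$ be the set of regular central elements of $B$ (central elements that are not zero divisors), and assume $J\cap S\neq\varnothing$. Then $A\bowtie^{f}J$ is a weak Armendariz ring if and only if both $A$ and $f(A)+J$ are weak Armendariz rings.
   Context: All rings are associative with identity (not necessarily commutative), ring homomorphisms are unital, and ideals are two-sided. $\mathrm{nil}(R)$ denotes the set of nilpotent elements of a ring $R$. For a ring homomorphism $f:A\to B$ and an ideal $J$ of $B$, the amalgamation is the subring $A\bowtie^{f}J=\{(a,f(a)+j)\mid a\in A,\ j\in J\}$ of $A\times B$; $f(A)+J=\{f(a)+j: a\in A, j\in J\}$ is a subring of $B$. A ring $R$ is weak Armendariz if whenever $p(x)=\sum_{i=0}^n a_ix^i$ and $q(x)=\sum_{j=0}^m b_jx^j$ in $R[x]$ satisfy $p(x)q(x)=0$, then $a_ib_j\in\mathrm{nil}(R)$ for all $i,j$. *)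

From HB Require Import structures.
From mathcomp Require Import all_boot all_order all_algebra.
Set Implicit Arguments. Unset Strict Implicit. Unset Printing Implicit Defensive.
Import GRing.Theory.
Local Open Scope ring_scope.

Definition is_nilpotent (R : nzRingType) (x : R) : Prop := exists n : nat, x ^+ n = 0.

(* Polynomials over the subring S are the polynomials of {poly R} with all
   coefficients in S; multiplication and powers in S agree with those of R. *)
Definition weak_armendariz_sub (R : nzRingType) (S : R -> Prop) : Prop :=
  forall p q : {poly R}, (forall i, S p`_i) -> (forall i, S q`_i) ->
    p * q = 0 -> forall i j, is_nilpotent (p`_i * q`_j).

Definition weak_armendariz (R : nzRingType) : Prop :=
  forall p q : {poly R}, p * q = 0 -> forall i j, is_nilpotent (p`_i * q`_j).

Definition two_sided_ideal (R : nzRingType) (J : R -> Prop) : Prop :=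
  [/\ J 0, (forall x y, J x -> J y -> J (x + y)), (forall x, J x -> J (- x)),
      (forall r x, J x -> J (r * x)) & (forall r x, J x -> J (x * r))].

Definition proper_two_sided_ideal (R : nzRingType) (J : R -> Prop) : Prop :=
  two_sided_ideal J /\ exists b, ~ J b.

Definition regular_central (R : nzRingType) (s : R) : Prop :=
  (forall b, s * b = b * s) /\ (forall b, s * b = 0 -> b = 0) /\ (forall b, b * s = 0 -> b = 0).

Definition amalg (A B : nzRingType) (f : A -> B) (J : B -> Prop) : (A * B)%type -> Prop :=
  fun x => exists a j, J j /\ x = (a, f a + j).

Definition fApJ (A B : nzRingType) (f : A -> B) (J : B -> Prop) : B -> Prop :=
  fun b => exists a j, J j /\ b = f a + j.

Arguments is_nilpotent {R} x.
Arguments weak_armendariz_sub {R} S.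
Arguments two_sided_ideal {R} J.
Arguments proper_two_sided_ideal {R} J.
Arguments regular_central {R} s.
Arguments amalg {A B} f J _.
Arguments fApJ {A B} f J _.

(** Both directions go through the coordinate maps of [A * B].  Projecting a
    vanishing product of polynomials over [A ⋈^f J] to the two factors gives
    vanishing products over [A] and over [f(A) + J]; a coefficient product whose
    two coordinates are nilpotent is nilpotent.  Conversely, [A] embeds in
    [A ⋈^f J] by [a |-> (a, f a)].  For the second factor, a regular central
    element [s] of [J] gives the map [b |-> (0, s b)] of all of [B] into
    [0 × J ⊆ A ⋈^f J]; it multiplies products by [s^2], which can be cancelled
    from nilpotent elements.  Hence [B] itself, and a fortiori [f(A) + J], is
    weak Armendariz. *)

From HB Require Import structures.
From mathcomp Require Import all_boot all_order all_algebra.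
Set Implicit Arguments. Unset Strict Implicit. Unset Printing Implicit Defensive.
Local Open Scope ring_scope.
Import GRing.Theory.

Lemma rmorph_nilpotent (R T : nzRingType) (g : {rmorphism R -> T}) (x : R) :
  is_nilpotent x -> is_nilpotent (g x).
Proof. by case=> n xn0; exists n; rewrite -rmorphXn xn0 rmorph0. Qed.

Lemma nilpotent_pair (A B : nzRingType) (x : A * B) :
  is_nilpotent x.1 -> is_nilpotent x.2 -> is_nilpotent x.
Proof.
move=> [m xm0] [n xn0]; exists (m + n)%N.
have fst0 : (x ^+ (m + n)%N).1 = 0 by rewrite (rmorphXn fst) exprD xm0 mul0r.
have snd0 : (x ^+ (m + n)%N).2 = 0 by rewrite (rmorphXn snd) addnC exprD xn0 mul0r.
by move: fst0 snd0; case: (x ^+ (m + n)%N) => u v /= -> ->.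
Qed.

Lemma lreg_comm_nilpotent (R : nzRingType) (s y : R) :
  GRing.lreg s -> GRing.comm s y -> is_nilpotent (s * y) -> is_nilpotent y.
Proof.
move=> sreg syC [n]; rewrite exprMn_comm // -(mulr0 (s ^+ n)).
by move=> /(lregX sreg) yn0; exists n.
Qed.

Lemma weak_armendariz_restrict (R : nzRingType) (S : R -> Prop) :
  weak_armendariz R -> weak_armendariz_sub S.
Proof. by move=> wR p q _ _; apply: wR. Qed.

Lemma map_poly_mul_twisted (R T : nzRingType) (g h : {additive R -> T}) :
  (forall x y, h (x * y) = g x * g y) ->
  forall p q : {poly R}, map_poly g p * map_poly g q = map_poly h (p * q).
Proof.
move=> hM p q; apply/polyP => k; rewrite coef_map !coefM raddf_sum.
by apply: eq_bigr => l _; rewrite !coef_map hM.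
Qed.

Lemma weak_armendariz_sub_embed (R T : nzRingType) (S : T -> Prop)
    (g h : {additive R -> T}) :
  (forall x, S (g x)) -> (forall x y, h (x * y) = g x * g y) ->
  (forall y, is_nilpotent (h y) -> is_nilpotent y) ->
  weak_armendariz_sub S -> weak_armendariz R.
Proof.
move=> Sg hM h_nil wS p q pq0 i j; apply: h_nil; rewrite hM.
rewrite -!(coef_map g); apply: wS => [k|k|]; rewrite ?coef_map //.
by rewrite (map_poly_mul_twisted hM) pq0 raddf0.
Qed.

Lemma weak_armendariz_sub_prod (A B : nzRingType) (S : A * B -> Prop)
    (SA : A -> Prop) (SB : B -> Prop) :
  (forall x, S x -> SA x.1) -> (forall x, S x -> SB x.2) ->
  weak_armendariz_sub SA -> weak_armendariz_sub SB -> weak_armendariz_sub S.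
Proof.
move=> S_fst S_snd wA wB P Q SP SQ PQ0 i j.
have proj_mul0 (pr : {rmorphism A * B -> _}) :
    map_poly pr P * map_poly pr Q = 0 by rewrite -rmorphM PQ0 rmorph0.
apply: nilpotent_pair; rewrite rmorphM -!coef_map.
  by apply: (wA _ _ _ _ (proj_mul0 _ fst)) => k; rewrite coef_map; apply: S_fst.
by apply: (wB _ _ _ _ (proj_mul0 _ snd)) => k; rewrite coef_map; apply: S_snd.
Qed.

Section Amalgamation.

Variables (A B : nzRingType) (f : {rmorphism A -> B}) (J : B -> Prop).
Hypothesis idJ : two_sided_ideal J.

Definition graph_map (a : A) : A * B := (a, f a).

Fact graph_map_zmod_morphism : zmod_morphism graph_map.
Proof. by move=> x y; rewrite /graph_map rmorphB. Qed.

Fact graph_map_monoid_morphism : monoid_morphism graph_map.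
Proof. by split=> [|x y]; rewrite /graph_map ?rmorph1 ?rmorphM. Qed.

HB.instance Definition _ :=
  GRing.isZmodMorphism.Build A (A * B)%type graph_map graph_map_zmod_morphism.
HB.instance Definition _ :=
  GRing.isMonoidMorphism.Build A (A * B)%type graph_map graph_map_monoid_morphism.

Definition snd_scale (s b : B) : A * B := (0, s * b).

Fact snd_scale_zmod_morphism (s : B) : zmod_morphism (snd_scale s).
Proof. by move=> x y; rewrite /snd_scale mulrBr; congr (_, _); rewrite /= subr0. Qed.

HB.instance Definition _ (s : B) :=
  GRing.isZmodMorphism.Build B (A * B)%type (snd_scale s) (snd_scale_zmod_morphism s).

Lemma snd_scale_sqrM (s : B) : (forall b, s * b = b * s) ->
  forall x y, snd_scale (s * s) (x * y) = snd_scale s x * snd_scale s y.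
Proof.
move=> sC x y; rewrite /snd_scale; congr (_, _) => /=; first by rewrite mulr0.
by rewrite !mulrA -(mulrA s x) -sC mulrA.
Qed.

Lemma graph_map_amalg (a : A) : amalg f J (graph_map a).
Proof. by case: idJ => J0 _ _ _ _; exists a, 0; rewrite addr0. Qed.

Lemma snd_scale_amalg (s : B) : J s -> forall b, amalg f J (snd_scale s b).
Proof.
case: idJ => _ _ _ _ JR Js b; exists 0, (s * b).
by rewrite rmorph0 add0r; split; first exact: JR.
Qed.

Lemma snd_amalg (x : A * B) : amalg f J x -> fApJ f J x.2.
Proof. by case=> a [j [Jj ->]]; exists a, j. Qed.

Lemma weak_armendariz_amalg_fst :
  weak_armendariz_sub (amalg f J) -> weak_armendariz A.
Proof.
apply: (weak_armendariz_sub_embed graph_map_amalg (rmorphM _)).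
by move=> y /(rmorph_nilpotent fst).
Qed.

Lemma weak_armendariz_amalg_snd (s : B) : J s -> regular_central s ->
  weak_armendariz_sub (amalg f J) -> weak_armendariz B.
Proof.
move=> Js [sC [s_lreg _]]; have s_reg : GRing.lreg s by apply: mulrI0_lreg.
apply: (weak_armendariz_sub_embed (snd_scale_amalg Js) (snd_scale_sqrM sC)).
move=> y /(rmorph_nilpotent snd) /=; rewrite -mulrA.
by move=> /(lreg_comm_nilpotent s_reg (sC _)) /(lreg_comm_nilpotent s_reg (sC y)).
Qed.

Lemma weak_armendariz_amalg :
  weak_armendariz A -> weak_armendariz_sub (fApJ f J) ->
  weak_armendariz_sub (amalg f J).
Proof.
move=> wA.
apply: (weak_armendariz_sub_prod (SA := fun _ => True) (fun _ _ => I) snd_amalg).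
exact: weak_armendariz_restrict.
Qed.

End Amalgamation.

Theorem theorem4p1 (A B : nzRingType) (f : {rmorphism A -> B}) (J : B -> Prop)
  (hJ : proper_two_sided_ideal J) (hS : exists s, J s /\ regular_central s) :
  weak_armendariz_sub (amalg f J) <->
  (weak_armendariz A /\ weak_armendariz_sub (fApJ f J)).
Proof.
case: hJ => idJ _; case: hS => s [Js s_rc].
split=> [wAm | [wA wfJ]]; last exact: weak_armendariz_amalg.
split; first exact: weak_armendariz_amalg_fst idJ wAm.
exact: weak_armendariz_restrict (weak_armendariz_amalg_snd idJ Js s_rc wAm).
Qed.
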